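(* Let $G=(V,E)$ be a finite graph and $A \subset V$, $A \neq \emptyset$. Then: (i) $\mathbb P_V(A \in \mathrm{Inv}) = Z(A) Z(A^c) / Z(V)$. (ii) For $\mathcal F_A$-measurable $f$, $\mathbb E_V(f \mid A \in \mathrm{Inv}) = \mathbb E_A(f(\cdot \oplus \mathrm{id}))$. (iii) For $\mathcal F_A$-measurable $f$ and $\mathcal F_{A^c}$-measurable $g$, $$\mathbb E_V(f g \mid A \in \mathrm{Inv}) = \mathbb E_V(f \mid A \in \mathrm{Inv})\, \mathbb E_V(g \mid A \in \mathrm{Inv}) = \mathbb E_A(f(\cdot \oplus \mathrm{id}))\, \mathbb E_{A^c}(g(\cdot \oplus \mathrm{id})).$$ (iv) For $\mathcal F_A$-measurable $f$ and $\mathcal B \in \mathcal F_{A^c}$, $\mathbb E_V(f \mid A \in \mathrm{Inv}, \mathcal B) = \mathbb E_A(f)$.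
   Context: For $U\subset V$, $\mathcal S_U$ is the set of bijections $\pi:U\to U$ with $\pi(x)=x$ or $\{x,\pi(x)\}\in E$ for all $x\in U$ (edges within $U$). $\mathcal H_U(\pi)=\sum_{x\in U}\mathbb 1\{\pi(x)\ne x\}$, $Z(U)=\sum_{\pi\in\mathcal S_U}e^{-\alpha\mathcal H_U(\pi)}$ ($Z(\emptyset)=1$), $\mathbb P_U(\pi)=e^{-\alpha\mathcal H_U(\pi)}/Z(U)$, and $\mathbb E_U$ the corresponding expectation. For $B\subset V$, $\mathcal F_B$ is the $\sigma$-algebra on $\mathcal S_V$ generated by the events $\{\pi:\pi(x)=y,\ \pi^{-1}(x)=z\}$, $x\in B$, $y,z\in V$. $\mathrm{Inv}(\pi)=\{A\subset V:\pi(A)=A\}$ and $\{A\in\mathrm{Inv}\}$ is the event $\{\pi:\pi(A)=A\}$. For $\pi\in\mathcal S_A$, $\pi\oplus\mathrm{id}\in\mathcal S_V$ is the extension of $\pi$ by the identity outside $A$; for $f$ on $\mathcal S_V$, $\mathbb E_A(f)$ means $\mathbb E_A(f(\cdot\oplus\mathrm{id}))$. *)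

From HB Require Import structures.
From mathcomp Require Import all_boot all_order all_algebra all_fingroup.
From mathcomp Require Import all_classical all_reals all_analysis.
Set Implicit Arguments. Unset Strict Implicit. Unset Printing Implicit Defensive.
Import Order.TTheory GRing.Theory Num.Theory.
Local Open Scope ring_scope.
Local Open Scope classical_set_scope.

(* Finite graph G = (V,E): V = T (a finType), E given by a symmetric relation e
   (x ~ y iff {x,y} \in E).  Elements of S_U are represented as permutations of
   the whole vertex set T that fix every point outside U, i.e. pi (+) id.     *)
Section RandomPermutations.
Variables (T : finType) (e : rel T) (R : realType) (alpha : R).

Definition in_S (U : {set T}) (p : {perm T}) : bool :=
  perm_on U p && [forall x in U, (p x == x) || e x (p x)].

Definition Ham (U : {set T}) (p : {perm T}) : R :=
  (#|[set x in U | p x != x]|)%:R.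

Definition weight (U : {set T}) (p : {perm T}) : R := expR (- alpha * Ham U p).

Definition Z (U : {set T}) : R := \sum_(p | in_S U p) weight U p.

Definition PrU (U : {set T}) (p : {perm T}) : R := weight U p / Z U.

(* E_U(f) := E_U(f(. (+) id)) *)
Definition EU (U : {set T}) (f : {perm T} -> R) : R :=
  \sum_(p | in_S U p) f p * PrU U p.

Definition SV : set {perm T} := [set p | in_S [set: T] p].

Definition PrV (C : set {perm T}) : R :=
  \sum_(p | in_S [set: T] p) PrU [set: T] p * \1_C p.

Definition condEV (f : {perm T} -> R) (C : set {perm T}) : R :=
  (\sum_(p | in_S [set: T] p) f p * \1_C p * PrU [set: T] p) / PrV C.

Definition InvEv (A : {set T}) : set {perm T} := [set p | p @: A = A].

Definition gensF (B : {set T}) : set (set {perm T}) :=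
  [set C | exists x y z, x \in B /\
     C = SV `&` [set p : {perm T} | p x = y /\ (p^-1)%g x = z]].

Definition sigF (B : {set T}) : set (set {perm T}) := <<s SV, gensF B>>.

Definition Fmeasurable (B : {set T}) (f : {perm T} -> R) : Prop :=
  forall Y : set R, measurable Y -> sigF B (SV `&` f @^-1` Y).

End RandomPermutations.

From HB Require Import structures.
From mathcomp Require Import all_boot all_order all_algebra all_fingroup.
From mathcomp Require Import all_classical all_reals all_analysis.
From mathcomp Require Import ring.
Import Order.TTheory GRing.Theory Num.Theory.
Local Open Scope ring_scope.
Local Open Scope classical_set_scope.
Set Implicit Arguments. Unset Strict Implicit. Unset Printing Implicit Defensive.

(* A permutation pi in S_V with pi(A) = A splits uniquely as pi = pi_A pi_A^c
   with pi_A in S_A and pi_A^c in S_A^c (its restrictions), and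
   H_V(pi) = H_A(pi_A) + H_A^c(pi_A^c), so the Gibbs weight factorises: on the
   event {A in Inv}, P_V is the product P_A (x) P_A^c rescaled by
   Z(A) Z(A^c) / Z(V), which is (i).  An F_A-measurable function cannot
   separate permutations that agree, together with their inverses, on A; hence
   it only sees pi_A, while F_A^c-measurable functions and events only see
   pi_A^c.  Statements (ii)-(iv) are then Fubini on the product. *)

Section Agreement.
Variables (T : finType) (e : rel T).

Definition agree_on (B : {set T}) (p q : {perm T}) : Prop :=
  {in B, forall x, p x = q x /\ (p^-1)%g x = (q^-1)%g x}.

Lemma agree_on_sym (B : {set T}) (p q : {perm T}) :
  agree_on B p q -> agree_on B q p.
Proof. by move=> Hpq x /Hpq [-> ->]. Qed.

Lemma sigF_agree_on (B : {set T}) (X : set {perm T}) (p q : {perm T}) :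
  sigF e B X -> SV e p -> SV e q -> agree_on B p q -> X p -> X q.
Proof.
pose closed_agree := fun X : set {perm T} =>
  forall p q, SV e p -> SV e q -> agree_on B p q -> X p -> X q.
suff /[apply] : sigF e B `<=` closed_agree by apply.
apply: smallest_sub; last first.
  move=> _ [x [y [z [xB ->]]]] {}p {}q _ Sq Hpq [_ [<- <-]].
  by have [-> ->] := Hpq x xB.
split.
- by move=> ? ? _ _ _.
- move=> Y HY {}p {}q Sp Sq Hpq [_ Yp]; split=> // Yq; apply: Yp.
  exact: HY (agree_on_sym Hpq) Yq.
- by move=> F HF {}p {}q Sp Sq Hpq [n _ Fp]; exists n => //; apply: HF Fp.
Qed.

Lemma Fmeasurable_agree_on (R : realType) (B : {set T}) (f : {perm T} -> R)
    (p q : {perm T}) :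
  Fmeasurable e B f -> SV e p -> SV e q -> agree_on B p q -> f p = f q.
Proof.
move=> Hf Sp Sq Hpq.
by have [] := sigF_agree_on (Hf [set f p] (measurable_set1 _)) Sp Sq Hpq.
Qed.

Lemma indic_sigF_agree_on (R : realType) (B : {set T}) (X : set {perm T})
    (p q : {perm T}) :
  sigF e B X -> SV e p -> SV e q -> agree_on B p q -> \1_X p = \1_X q :> R.
Proof.
move=> HX Sp Sq Hpq; rewrite !indicE; congr ((nat_of_bool _)%:R).
apply/idP/idP => /set_mem Xpq; apply/mem_set.
  exact: sigF_agree_on HX Sp Sq Hpq Xpq.
exact: sigF_agree_on HX Sq Sp (agree_on_sym Hpq) Xpq.
Qed.

End Agreement.

Section PermSplitting.
Variables (T : finType) (A : {set T}).
Local Open Scope group_scope.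

Lemma perm_astabsE (p : {perm T}) : (p \in 'N(A | 'P)) = (p @: A == A).
Proof. by rewrite -astab1_set; apply/astab1P/eqP. Qed.

Lemma restr_perm_split (p : {perm T}) :
  p \in 'N(A | 'P) -> restr_perm A p * restr_perm (~: A) p = p.
Proof.
move=> pA; have pAc : p \in 'N(~: A | 'P) by rewrite astabsC.
apply/permP => x; rewrite permM.
have [xA | xAc] := boolP (x \in A).
  rewrite (restr_permE pA xA) (out_perm (restr_perm_on (~: A) p)) //.
  by rewrite inE negbK (astabs_act _ pA).
by rewrite (out_perm (restr_perm_on A p)) // (restr_permE pAc) ?inE.
Qed.

Variables (s t : {perm T}).
Hypotheses (sA : perm_on A s) (tAc : perm_on (~: A) t).

Lemma permM_split x : (s * t) x = if x \in A then s x else t x.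
Proof.
rewrite permM; have [xA | xAc] := ifPn.
  by rewrite (out_perm tAc) // inE negbK perm_closed.
by rewrite (out_perm sA).
Qed.

Lemma astabs_split : s * t \in 'N(A | 'P).
Proof.
apply/astabsP => x; rewrite /= apermE permM_split.
have [xA | xAc] := ifPn; first by rewrite perm_closed.
by have := perm_closed x tAc; rewrite !inE xAc => /negbTE.
Qed.

Lemma restr_perm_splitl : restr_perm A (s * t) = s.
Proof.
apply/permP => x; have [xA | xAc] := boolP (x \in A).
  by rewrite restr_permE ?astabs_split // permM_split xA.
by rewrite !(out_perm _ xAc) ?restr_perm_on.
Qed.

Lemma restr_perm_splitr : restr_perm (~: A) (s * t) = t.
Proof.
apply/permP => x; have [xAc | xA] := boolP (x \in ~: A).
  rewrite restr_permE ?astabsC ?astabs_split // permM_split.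
  by move: xAc; rewrite inE => /negbTE ->.
by rewrite !(out_perm _ xA) ?restr_perm_on.
Qed.

Lemma agree_on_splitl : agree_on A s (s * t).
Proof.
move=> x xA; rewrite permM_split xA; split=> //.
by rewrite invMg permM (out_perm (perm_onV tAc)) // inE negbK.
Qed.

Lemma agree_on_splitr : agree_on (~: A) t (s * t).
Proof.
move=> x xAc; rewrite permM_split; move: (xAc); rewrite inE => /negbTE ->.
split=> //; rewrite invMg permM (out_perm (perm_onV sA)) //.
by move: xAc; rewrite -(perm_closed _ (perm_onV tAc)) inE.
Qed.

End PermSplitting.

Section GibbsMeasure.
Variables (T : finType) (e : rel T) (R : realType) (alpha : R).

Lemma in_S_perm_on (U : {set T}) (p : {perm T}) : in_S e U p -> perm_on U p.
Proof. by case/andP. Qed.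

Lemma in_S_edge (U : {set T}) (p : {perm T}) x :
  in_S e U p -> x \in U -> (p x == x) || e x (p x).
Proof. by case/andP => _ /forall_inP; apply. Qed.

Lemma in_S1 (U : {set T}) : in_S e U 1%g.
Proof.
by rewrite /in_S perm_on1; apply/forall_inP => x _; rewrite perm1 eqxx.
Qed.

Lemma in_S_subset (U W : {set T}) (p : {perm T}) :
  U \subset W -> in_S e U p -> in_S e W p.
Proof.
move=> sUW pS; apply/andP; split.
  exact: fintype.subset_trans (in_S_perm_on pS) sUW.
apply/forall_inP => x xW; have [xU | xU] := boolP (x \in U).
  exact: in_S_edge pS xU.
by rewrite (out_perm (in_S_perm_on pS) xU) eqxx.
Qed.

Lemma in_S_restr (U W : {set T}) (p : {perm T}) :
  U \subset W -> in_S e W p -> p \in 'N(U | 'P)%g ->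
  in_S e U (restr_perm U p).
Proof.
move=> sUW pS pU; rewrite /in_S restr_perm_on; apply/forall_inP => x xU.
by rewrite (restr_permE pU xU) (in_S_edge pS) ?(fintype.subsetP sUW).
Qed.

Lemma Z_gt0 (U : {set T}) : 0 < Z e alpha U.
Proof.
rewrite /Z (bigD1 1%g) ?in_S1 //= ltr_wpDr ?expR_gt0 //.
by apply: sumr_ge0 => p _; apply/ltW/expR_gt0.
Qed.

Lemma EU_Z (U : {set T}) (f : {perm T} -> R) :
  EU e alpha U f * Z e alpha U = \sum_(q | in_S e U q) f q * weight alpha U q.
Proof.
rewrite /EU big_distrl; apply: eq_bigr => q _.
by rewrite /PrU /= mulrA divfK // gt_eqF ?Z_gt0.
Qed.

Lemma EU1 (U : {set T}) : EU e alpha U (fun=> 1) = 1.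
Proof.
apply: (mulIf (lt0r_neq0 (Z_gt0 U))); rewrite EU_Z mul1r.
by apply: eq_bigr => q _; rewrite mul1r.
Qed.

Lemma condEV_indic (C D : set {perm T}) :
  condEV e alpha \1_D C = PrV e alpha (C `&` D) / PrV e alpha C.
Proof.
rewrite /condEV /PrV; congr (_ / _); apply: eq_bigr => p _.
by rewrite indicI /=; ring.
Qed.

(* No hypothesis on [PrV (C `&` D)]: when it vanishes both sides are [_ / 0 = 0]. *)
Lemma condEV_setI (f : {perm T} -> R) (C D : set {perm T}) :
  PrV e alpha C != 0 ->
  condEV e alpha f (C `&` D)
  = condEV e alpha (fun p => f p * \1_D p) C / condEV e alpha \1_D C.
Proof.
move=> PC; rewrite condEV_indic /condEV invf_div mulrA divfK //.
by congr (_ / _); apply: eq_bigr => p _; rewrite indicI /=; ring.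
Qed.

Variable A : {set T}.

Definition factors_throughl (f : {perm T} -> R) : Prop :=
  forall s t, in_S e A s -> in_S e (~: A) t -> f (s * t)%g = f s.

Definition factors_throughr (g : {perm T} -> R) : Prop :=
  forall s t, in_S e A s -> in_S e (~: A) t -> g (s * t)%g = g t.

Lemma in_S_split (s t : {perm T}) :
  in_S e A s -> in_S e (~: A) t -> in_S e [set: T] (s * t)%g.
Proof.
move=> sS tS; apply/andP; split.
  by apply/fintype.subsetP => x; rewrite finset.in_setT.
apply/forall_inP => x _.
rewrite (permM_split (in_S_perm_on sS) (in_S_perm_on tS)).
have [xA | xAc] := ifPn.
  exact: in_S_edge sS xA.
by apply: in_S_edge tS _; rewrite inE.
Qed.

Lemma Ham_split (s t : {perm T}) : perm_on A s -> perm_on (~: A) t ->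
  Ham R [set: T] (s * t)%g = Ham R A s + Ham R (~: A) t.
Proof.
move=> sA tAc; rewrite /Ham -natrD -(cardsID A); congr (_%:R); congr (_ + _)%N;
  apply: eq_card => x; rewrite !inE (permM_split sA tAc);
  by case: (x \in A); rewrite ?andbT ?andbF.
Qed.

Lemma weight_split (s t : {perm T}) : perm_on A s -> perm_on (~: A) t ->
  weight alpha [set: T] (s * t)%g = weight alpha A s * weight alpha (~: A) t.
Proof. by move=> sA tAc; rewrite /weight Ham_split // mulrDr expRD. Qed.

Lemma indic_InvEv (p : {perm T}) : \1_(InvEv A) p = (p \in 'N(A | 'P)%g)%:R :> R.
Proof.
rewrite indicE perm_astabsE; congr ((nat_of_bool _)%:R).
by apply/idP/idP => [/set_mem -> | /eqP /mem_set].
Qed.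

Lemma sum_InvEv (F : {perm T} -> R) :
  \sum_(p | in_S e [set: T] p) F p * \1_(InvEv A) p
  = \sum_(s | in_S e A s) \sum_(t | in_S e (~: A) t) F (s * t)%g.
Proof.
rewrite pair_big /=.
transitivity (\sum_(p | in_S e [set: T] p && (p \in 'N(A | 'P)%g)) F p).
  rewrite [RHS]big_mkcondr /=; apply: eq_bigr => p _.
  by rewrite indic_InvEv; case: (_ \in _); rewrite ?mulr1 ?mulr0.
rewrite (reindex_onto (fun st => st.1 * st.2)%g
  (fun p => (restr_perm A p, restr_perm (~: A) p))) /=; last first.
  by move=> p /andP [_ pA]; apply: restr_perm_split.
apply: eq_bigl => -[s t] /=; apply/idP/idP.
  case/andP => /andP [stS stA] /eqP [E1 E2].
  apply/andP; split; [rewrite -E1 | rewrite -E2];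
    by apply: (in_S_restr _ stS); rewrite ?astabsC ?finset.subsetT.
case/andP => sS tS; have [sA tAc] := (in_S_perm_on sS, in_S_perm_on tS).
rewrite in_S_split // astabs_split // restr_perm_splitl // restr_perm_splitr //.
by rewrite eqxx.
Qed.

Lemma sum_InvEv_mul (f g : {perm T} -> R) :
  factors_throughl f -> factors_throughr g ->
  \sum_(p | in_S e [set: T] p) f p * g p * \1_(InvEv A) p * PrU e alpha [set: T] p
  = EU e alpha A f * Z e alpha A * (EU e alpha (~: A) g * Z e alpha (~: A))
    / Z e alpha [set: T].
Proof.
move=> fA gAc; under eq_bigr do rewrite mulrAC.
rewrite sum_InvEv !EU_Z mulrAC !big_distrl /=; apply: eq_bigr => s sS.
rewrite big_distrr /=; apply: eq_bigr => t tS.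
by rewrite fA ?gAc // /PrU weight_split ?in_S_perm_on //; ring.
Qed.

End GibbsMeasure.

Section ConditioningOnInvariance.
Variables (T : finType) (e : rel T) (R : realType) (alpha : R) (A : {set T}).

Lemma PrV_InvEv :
  PrV e alpha (InvEv A) = Z e alpha A * Z e alpha (~: A) / Z e alpha [set: T].
Proof.
transitivity (\sum_(p | in_S e [set: T] p)
    1 * 1 * \1_(InvEv A) p * PrU e alpha [set: T] p).
  by apply: eq_bigr => p _; rewrite !mul1r mulrC.
by rewrite sum_InvEv_mul // !EU1 !mul1r.
Qed.

Lemma PrV_InvEv_neq0 : PrV e alpha (InvEv A) != 0.
Proof. by rewrite PrV_InvEv gt_eqF // !(mulr_gt0, invr_gt0, Z_gt0). Qed.

Lemma condEV_InvEv_mul (f g : {perm T} -> R) :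
  factors_throughl e A f -> factors_throughr e A g ->
  condEV e alpha (fun p => f p * g p) (InvEv A)
  = EU e alpha A f * EU e alpha (~: A) g.
Proof.
move=> fA gAc; rewrite /condEV sum_InvEv_mul // PrV_InvEv.
have ZA := Z_gt0 e alpha A; have ZAc := Z_gt0 e alpha (~: A).
have ZV := Z_gt0 e alpha [set: T].
by field; rewrite !gt_eqF.
Qed.

Lemma condEV_InvEvl (f : {perm T} -> R) :
  factors_throughl e A f -> condEV e alpha f (InvEv A) = EU e alpha A f.
Proof.
move=> fA; rewrite -[RHS]mulr1 -(EU1 e alpha (~: A)) -condEV_InvEv_mul //.
by congr condEV; apply/funext => p; rewrite mulr1.
Qed.

Lemma condEV_InvEvr (g : {perm T} -> R) :
  factors_throughr e A g -> condEV e alpha g (InvEv A) = EU e alpha (~: A) g.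
Proof.
move=> gAc; rewrite -[RHS]mul1r -(EU1 e alpha A) -condEV_InvEv_mul //.
by congr condEV; apply/funext => p; rewrite mul1r.
Qed.

Lemma condEV_InvEv_setI (f : {perm T} -> R) (B : set {perm T}) :
  factors_throughl e A f ->
  factors_throughr e A (\1_B : {perm T} -> R) ->
  PrV e alpha (InvEv A `&` B) != 0 ->
  condEV e alpha f (InvEv A `&` B) = EU e alpha A f.
Proof.
move=> fA BAc PB; have EB : EU e alpha (~: A) \1_B != 0.
  by rewrite -condEV_InvEvr // condEV_indic mulf_neq0 ?invr_neq0 ?PrV_InvEv_neq0.
rewrite condEV_setI ?PrV_InvEv_neq0 // condEV_InvEv_mul // condEV_InvEvr //.
by rewrite mulfK.
Qed.

End ConditioningOnInvariance.

Section SplitMeasurability.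
Variables (T : finType) (e : rel T) (R : realType) (A : {set T}).

Lemma Fmeasurable_factors_throughl (f : {perm T} -> R) :
  Fmeasurable e A f -> factors_throughl e A f.
Proof.
move=> Hf s t sS tS; apply: esym; apply: (Fmeasurable_agree_on Hf).
- exact: in_S_subset (finset.subsetT A) sS.
- exact: in_S_split sS tS.
- exact: agree_on_splitl (in_S_perm_on sS) (in_S_perm_on tS).
Qed.

Lemma Fmeasurable_factors_throughr (g : {perm T} -> R) :
  Fmeasurable e (~: A) g -> factors_throughr e A g.
Proof.
move=> Hg s t sS tS; apply: esym; apply: (Fmeasurable_agree_on Hg).
- exact: in_S_subset (finset.subsetT (~: A)) tS.
- exact: in_S_split sS tS.
- exact: agree_on_splitr (in_S_perm_on sS) (in_S_perm_on tS).
Qed.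

Lemma sigF_indic_factors_throughr (B : set {perm T}) :
  sigF e (~: A) B -> factors_throughr e A (\1_B : {perm T} -> R).
Proof.
move=> HB s t sS tS; apply: esym; apply: (indic_sigF_agree_on _ HB).
- exact: in_S_subset (finset.subsetT (~: A)) tS.
- exact: in_S_split sS tS.
- exact: agree_on_splitr (in_S_perm_on sS) (in_S_perm_on tS).
Qed.

End SplitMeasurability.

Unset Implicit Arguments.

Theorem proposition4p1 (T : finType) (e : rel T) (R : realType) (alpha : R)
  (He : symmetric e) (A : {set T}) (HA : A != finset.set0) :
  [/\ PrV e alpha (InvEv A) = Z e alpha A * Z e alpha (~: A) / Z e alpha [set: T],
      (forall f : {perm T} -> R, Fmeasurable e A f ->
         condEV e alpha f (InvEv A) = EU e alpha A f),
      (forall f g : {perm T} -> R, Fmeasurable e A f -> Fmeasurable e (~: A) g ->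
         condEV e alpha (fun p => f p * g p) (InvEv A)
           = condEV e alpha f (InvEv A) * condEV e alpha g (InvEv A)
         /\ condEV e alpha f (InvEv A) * condEV e alpha g (InvEv A)
           = EU e alpha A f * EU e alpha (~: A) g) &
      (forall (f : {perm T} -> R) (B : set {perm T}),
         Fmeasurable e A f -> sigF e (~: A) B ->
         PrV e alpha (InvEv A `&` B) != 0 ->
         condEV e alpha f (InvEv A `&` B) = EU e alpha A f)].
Proof.
split.
- exact: PrV_InvEv.
- by move=> f /Fmeasurable_factors_throughl; apply: condEV_InvEvl.
- move=> f g /Fmeasurable_factors_throughl Hf /Fmeasurable_factors_throughr Hg.
  by rewrite condEV_InvEv_mul // condEV_InvEvl // condEV_InvEvr.
- move=> f B /Fmeasurable_factors_throughl Hf /(sigF_indic_factors_throughr R) HB.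
  exact: condEV_InvEv_setI.
Qed.
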